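(* Let $m,n\ge1$ be integers and $f\in C[0,1]$, and let $I_{n,m}(f)=\frac{1}{m(n+1)}\sum_{k=1}^m\sum_{i=0}^n f\left(\frac{kn-n+i}{mn}\right)$. Then (i) $\left|\int_0^1f(x)\,dx-I_{n,m}(f)\right|\le 2K\left(\frac{1}{24m^2n},f;C^0[0,1],C^2[0,1]\right)$; (ii) $\left|\int_0^1f(x)\,dx-I_{n,m}(f)\right|\le\frac94\,\omega_2\left(f;\frac{1}{m\sqrt{6n}}\right)$.
   Context: $I_{n,m}(f)$ equals $\int_0^1\overline{B}_{n,m}(f;x)\,dx$ for the composite Bernstein operator $\overline{B}_{n,m}(f;x)=B_n^{[\frac{k-1}{m},\frac km]}(f;x)$ on $\left[\frac{k-1}{m},\frac km\right]$, where $B_n^{[a,b]}(f;x)=\frac{1}{(b-a)^n}\sum_{i=0}^n\binom ni(x-a)^i(b-x)^{n-i}f(a+i\frac{b-a}{n})$. The $K$-functional is $K(\delta,f;C^0[0,1],C^2[0,1])=\inf\{\|f-g\|_\infty+\delta\|g''\|_\infty: g\in C^2[0,1]\}$ for $\delta\ge0$. $\omega_2(f,\delta)=\sup\{|f(x-h)-2f(x)+f(x+h)|: x\pm h\in[0,1],\ |h|\le\delta\}$. *)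

From Stdlib Require Import Reals.
From Coquelicot Require Import Coquelicot.
Open Scope R_scope.

Definition I01 (x : R) : Prop := 0 <= x <= 1.

Definition cont01 (f : R -> R) : Prop :=
  forall x, I01 x -> filterlim f (within I01 (locally x)) (locally (f x)).

Definition has_deriv01 (g dg : R -> R) : Prop :=
  forall x, I01 x ->
    filterlim (fun h => (g (x + h) - g x) / h)
      (within (fun h => h <> 0 /\ I01 (x + h)) (locally 0)) (locally (dg x)).

Definition C2_01 (g g1 g2 : R -> R) : Prop :=
  has_deriv01 g g1 /\ has_deriv01 g1 g2 /\ cont01 g2.

Definition supnorm01 (f : R -> R) : R :=
  real (Lub_Rbar (fun y => exists x, I01 x /\ y = Rabs (f x))).

Definition Kfun (delta : R) (f : R -> R) : R :=
  real (Glb_Rbar (fun v => exists g g1 g2, C2_01 g g1 g2 /\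
          v = supnorm01 (fun x => f x - g x) + delta * supnorm01 g2)).

Definition omega2 (f : R -> R) (delta : R) : R :=
  real (Lub_Rbar (fun y => exists x h, I01 (x - h) /\ I01 (x + h) /\
          Rabs h <= delta /\ y = Rabs (f (x - h) - 2 * f x + f (x + h)))).

Definition Inm (n m : nat) (f : R -> R) : R :=
  / (INR m * (INR n + 1)) *
  sum_n (fun k' => let k := (k' + 1)%nat in
     sum_n (fun i => f ((INR k * INR n - INR n + INR i) / (INR m * INR n))) n)
   (m - 1).

From Stdlib Require Import Reals Lra Lia.
From Coquelicot Require Import Coquelicot.
Open Scope R_scope.

(* On the piece [a, a + H], H = 1/m, the rule I_{n,m} averages f over n + 1 equispaced nodes,
   and its error there is (T_1 + n T_n) / (n + 1), where T_k is the error of the k-panel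
   composite trapezoidal rule.  A trapezoid panel of width h errs by at most ||g''|| h^3 / 12
   (g +- ||g''|| x^2 / 2 is convex, and a convex function has a nonnegative trapezoid error),
   so the error on g in C^2 is at most ||g''|| / (12 m^2 n); adding 2 ||f - g|| for f - g
   gives (i).  For (ii), a panel of half-width at most t errs by at most its width times
   w = omega_2(f, t).  This gives |T_n| <= H w when n >= 2; for T_1, refine [a, a + H] into
   N = floor(sqrt(6n)) + 1 panels: T_1 - T_N is a weighted sum of second differences of f
   with step H / N, of size at most H w (N^2 - 1) / 12 <= H w n.  So each piece errs by at
   most 2 H w, and in total by 2 w <= 9/4 w. *)

(** * Functions on [0, 1] *)

(* Composing with [clamp01] extends a continuous function on [0, 1] to one on R. *)
Definition clamp01 (x : R) : R := Rmax 0 (Rmin 1 x).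

Lemma clamp01_I01 x : I01 (clamp01 x).
Proof. unfold clamp01, I01, Rmax, Rmin. repeat destruct Rle_dec; lra. Qed.

Lemma clamp01_id x : I01 x -> clamp01 x = x.
Proof. unfold clamp01, I01, Rmax, Rmin. intros. repeat destruct Rle_dec; lra. Qed.

Lemma clamp01_dist x y : Rabs (clamp01 y - clamp01 x) <= Rabs (y - x).
Proof.
  unfold clamp01, Rmax, Rmin, Rabs.
  repeat destruct Rle_dec; repeat destruct Rcase_abs; lra.
Qed.

Lemma continuity_clamp01 f : cont01 f -> continuity (fun x => f (clamp01 x)).
Proof.
  intros Hf x. apply continuity_pt_filterlim, filterlim_locally. intros eps.
  destruct (proj1 (filterlim_locally _ _) (Hf _ (clamp01_I01 x)) eps) as [d Hd].
  exists d. intros y Hy. apply (Hd (clamp01 y)); [|apply clamp01_I01].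
  eapply Rle_lt_trans; [apply clamp01_dist|exact Hy].
Qed.

Lemma bounded_on01 phi : continuity (fun x => phi (clamp01 x)) ->
  exists B, forall x, I01 x -> Rabs (phi x) <= B.
Proof.
  intros Hc.
  destruct (continuity_ab_maj _ 0 1 ltac:(lra) (fun c _ => Hc c)) as [xmax [Hmax _]].
  destruct (continuity_ab_min _ 0 1 ltac:(lra) (fun c _ => Hc c)) as [xmin [Hmin _]].
  exists (Rmax (Rabs (phi (clamp01 xmax))) (Rabs (phi (clamp01 xmin)))).
  intros x Hx. specialize (Hmax x Hx). specialize (Hmin x Hx). cbv beta in *.
  rewrite (clamp01_id x Hx) in Hmax, Hmin.
  unfold Rmax, Rabs. repeat destruct Rle_dec; repeat destruct Rcase_abs; lra.
Qed.

Lemma Lub_Rbar_real_bounds (S : R -> Prop) y B : S y -> (forall z, S z -> z <= B) ->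
  y <= real (Lub_Rbar S) <= B.
Proof.
  intros Hy HB. destruct (Lub_Rbar_correct S) as [Hub Hleast].
  assert (H1 : Rbar_le y (Lub_Rbar S)) by (apply Hub; auto).
  assert (H2 : Rbar_le (Lub_Rbar S) B) by (apply Hleast; intros z Hz; apply HB; auto).
  destruct (Lub_Rbar S); simpl in *; try contradiction; lra.
Qed.

Lemma Glb_Rbar_real_ge (S : R -> Prop) v L : S v -> (forall z, S z -> L <= z) ->
  L <= real (Glb_Rbar S).
Proof.
  intros Hv HL. destruct (Glb_Rbar_correct S) as [Hlb Hgreatest].
  assert (H1 : Rbar_le (Glb_Rbar S) v) by (apply Hlb; auto).
  assert (H2 : Rbar_le L (Glb_Rbar S)) by (apply Hgreatest; intros z Hz; apply HL; auto).
  destruct (Glb_Rbar S); simpl in *; try contradiction; lra.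
Qed.

Lemma supnorm01_ge phi x : continuity (fun y => phi (clamp01 y)) -> I01 x ->
  Rabs (phi x) <= supnorm01 phi.
Proof.
  intros Hc Hx. destruct (bounded_on01 phi Hc) as [B HB].
  apply (Lub_Rbar_real_bounds _ _ B); [exists x; auto|].
  intros z [y [Hy ->]]. auto.
Qed.

Lemma omega2_ge f t c s : cont01 f -> I01 (c - s) -> I01 (c + s) -> Rabs s <= t ->
  Rabs (f (c - s) - 2 * f c + f (c + s)) <= omega2 f t.
Proof.
  intros Hf Hl Hr Hs. destruct (bounded_on01 f (continuity_clamp01 f Hf)) as [B HB].
  apply (Lub_Rbar_real_bounds _ _ (4 * B)); [exists c, s; auto|].
  intros z [x [h [Hxl [Hxr [_ ->]]]]].
  assert (Hx : I01 x) by (unfold I01 in *; lra).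
  pose proof (HB _ Hxl) as B1; pose proof (HB _ Hxr) as B2; pose proof (HB _ Hx) as B3.
  apply Rabs_le_between in B1, B2, B3. apply Rabs_le. lra.
Qed.

Lemma omega2_ge0 f t : cont01 f -> 0 <= t -> 0 <= omega2 f t.
Proof.
  intros Hf Ht. eapply Rle_trans; [apply Rabs_pos|].
  apply (omega2_ge f t 0 0); auto; unfold I01; rewrite ?Rabs_R0; lra.
Qed.

Lemma has_deriv01_eps g g1 x : has_deriv01 g g1 -> I01 x -> forall eps, 0 < eps ->
  exists d, 0 < d /\ forall h, h <> 0 -> Rabs h < d -> I01 (x + h) ->
    Rabs ((g (x + h) - g x) / h - g1 x) < eps.
Proof.
  intros Hg Hx eps He.
  destruct (proj1 (filterlim_locally _ _) (Hg x Hx) (mkposreal eps He)) as [d Hd].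
  exists d; split; [apply cond_pos|]. intros h Hh0 Hh Hxh.
  apply (Hd h); [|split; auto]. change (Rabs (h - 0) < d). rewrite Rminus_0_r; exact Hh.
Qed.

Lemma has_deriv01_cont01 g g1 : has_deriv01 g g1 -> cont01 g.
Proof.
  intros Hg x Hx. apply filterlim_locally. intros eps.
  destruct (has_deriv01_eps g g1 x Hg Hx 1 Rlt_0_1) as [d [Hd Hq]].
  set (L := Rabs (g1 x) + 1).
  assert (HL : 0 < L) by (pose proof (Rabs_pos (g1 x)); unfold L; lra).
  assert (Hd' : 0 < Rmin d (eps / L))
    by (apply Rmin_pos; [lra|apply Rdiv_lt_0_compat; [apply cond_pos|exact HL]]).
  exists (mkposreal _ Hd'). intros y Hy HIy. change (Rabs (y - x) < Rmin d (eps / L)) in Hy.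
  change (Rabs (g y - g x) < eps).
  destruct (Req_dec (y - x) 0) as [E|E].
  { replace y with x by lra. rewrite Rminus_diag, Rabs_R0. apply cond_pos. }
  assert (Hq' := Hq (y - x) E (Rlt_le_trans _ _ _ Hy (Rmin_l _ _))).
  rewrite Rplus_minus in Hq'. specialize (Hq' HIy).
  assert (Hslope : Rabs ((g y - g x) / (y - x)) <= L).
  { pose proof (Rabs_triang_inv ((g y - g x) / (y - x)) (g1 x)). unfold L; lra. }
  assert (Hyx : Rabs (y - x) * L < eps).
  { apply (Rmult_lt_compat_r L) in Hy; [|exact HL].
    eapply Rlt_le_trans; [exact Hy|].
    apply Rle_trans with (eps / L * L); [apply Rmult_le_compat_r; [lra|apply Rmin_r]|].
    right; field; lra. }
  replace (g y - g x) with ((g y - g x) / (y - x) * (y - x)) by (field; exact E).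
  rewrite Rabs_mult. pose proof (Rabs_pos (y - x)).
  pose proof (Rabs_pos ((g y - g x) / (y - x))). nra.
Qed.

Lemma has_deriv01_is_derive g g1 x : has_deriv01 g g1 -> 0 < x < 1 ->
  is_derive (fun y => g (clamp01 y)) x (g1 x).
Proof.
  intros Hg Hx. apply is_derive_Reals. intros eps He.
  destruct (has_deriv01_eps g g1 x Hg ltac:(unfold I01; lra) eps He) as [d [Hd Hq]].
  assert (Hd' : 0 < Rmin d (Rmin x (1 - x))) by (repeat apply Rmin_pos; lra).
  exists (mkposreal _ Hd'). intros h Hh0 Hh. simpl in Hh.
  pose proof (Rmin_l d (Rmin x (1 - x))). pose proof (Rmin_r d (Rmin x (1 - x))).
  pose proof (Rmin_l x (1 - x)). pose proof (Rmin_r x (1 - x)).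
  assert (Hxh : I01 (x + h)) by (apply Rabs_lt_between in Hh; unfold I01; lra).
  rewrite (clamp01_id (x + h) Hxh), (clamp01_id x) by (unfold I01; lra).
  apply Hq; auto. lra.
Qed.

Lemma has_deriv01_const c : has_deriv01 (fun _ => c) (fun _ => 0).
Proof.
  intros x _. apply filterlim_locally. intros eps.
  exists (mkposreal 1 Rlt_0_1). intros h _ _. change (Rabs ((c - c) / h - 0) < eps).
  replace ((c - c) / h - 0) with 0 by (unfold Rdiv; ring). rewrite Rabs_R0. apply cond_pos.
Qed.

Lemma C2_01_const c : C2_01 (fun _ => c) (fun _ => 0) (fun _ => 0).
Proof.
  split; [apply has_deriv01_const|split; [apply has_deriv01_const|]].
  intros x _. apply filterlim_const.
Qed.

(** * The trapezoidal rule *)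

Lemma ex_RInt_continuity f a b : continuity f -> ex_RInt f a b.
Proof. intros Hf. apply (@ex_RInt_continuous R_CompleteNormedModule).
  intros x _. apply continuity_pt_filterlim, Hf. Qed.

Lemma continuity_shift phi c : continuity phi -> continuity (fun s => phi (c + s)).
Proof.
  intros H. apply (continuity_comp (fun s => c + s) phi); [|exact H].
  apply continuity_plus;
    [apply continuity_const; intros ? ?; reflexivity|apply derivable_continuous, derivable_id].
Qed.

Lemma continuity_reflect phi c : continuity phi -> continuity (fun s => phi (c - s)).
Proof.
  intros H. apply (continuity_comp (fun s => c - s) phi); [|exact H].
  apply continuity_minus;
    [apply continuity_const; intros ? ?; reflexivity|apply derivable_continuous, derivable_id].
Qed.

Lemma RInt_centered phi c r : continuity phi ->
  RInt phi (c - r) (c + r) = RInt (fun s => phi (c - s) + phi (c + s)) 0 r.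
Proof.
  intros H.
  assert (Hl : RInt phi (c - r) c = RInt (fun s => phi (c - s)) 0 r).
  { pose proof (RInt_comp_lin phi (-1) c 0 r (ex_RInt_continuity _ _ _ H)) as E.
    replace (-1 * 0 + c) with c in E by ring. replace (-1 * r + c) with (c - r) in E by ring.
    rewrite <- opp_RInt_swap, <- E by apply ex_RInt_continuity, H.
    rewrite (RInt_ext _ (fun s => opp (phi (c - s)))).
    - rewrite (RInt_opp (V := R_CompleteNormedModule) (fun s => phi (c - s)))
        by apply ex_RInt_continuity, continuity_reflect, H.
      apply opp_opp.
    - intros x _. unfold scal, opp; simpl; unfold mult; simpl.
      replace (-1 * x + c) with (c - x) by ring. ring. }
  assert (Hr : RInt phi c (c + r) = RInt (fun s => phi (c + s)) 0 r).
  { pose proof (RInt_comp_lin phi 1 c 0 r (ex_RInt_continuity _ _ _ H)) as E.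
    replace (1 * 0 + c) with c in E by ring. replace (1 * r + c) with (c + r) in E by ring.
    rewrite <- E. apply RInt_ext. intros x _. unfold scal; simpl; unfold mult; simpl.
    replace (1 * x + c) with (c + x) by ring. ring. }
  rewrite <- (RInt_Chasles phi (c - r) c (c + r)) by apply ex_RInt_continuity, H.
  rewrite Hl, Hr. symmetry.
  apply (RInt_plus (V := R_CompleteNormedModule)); apply ex_RInt_continuity;
    [apply continuity_reflect|apply continuity_shift]; exact H.
Qed.

Lemma RInt_minus_R f g a b : continuity f -> continuity g ->
  RInt (fun x => f x - g x) a b = RInt f a b - RInt g a b.
Proof.
  intros Hf Hg. apply (RInt_minus (V := R_CompleteNormedModule)); apply ex_RInt_continuity; auto.
Qed.

Lemma RInt_plus_R f g a b : continuity f -> continuity g ->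
  RInt (fun x => f x + g x) a b = RInt f a b + RInt g a b.
Proof.
  intros Hf Hg. apply (RInt_plus (V := R_CompleteNormedModule)); apply ex_RInt_continuity; auto.
Qed.

Definition trap_err (phi : R -> R) (u v : R) : R :=
  (v - u) * (phi u + phi v) / 2 - RInt phi u v.

Lemma continuity_sym_sum phi c : continuity phi ->
  continuity (fun s => phi (c - s) + phi (c + s)).
Proof.
  intros H. apply continuity_plus; [apply continuity_reflect|apply continuity_shift]; exact H.
Qed.

Lemma trap_err_centered phi c r : continuity phi ->
  trap_err phi (c - r) (c + r) =
  RInt (fun s => (phi (c - r) + phi (c + r)) - (phi (c - s) + phi (c + s))) 0 r.
Proof.
  intros H. unfold trap_err. rewrite RInt_centered by exact H.
  rewrite RInt_minus_R, RInt_const.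
  - unfold scal; simpl; unfold mult; simpl. field.
  - apply continuity_const. intros ? ?; reflexivity.
  - apply continuity_sym_sum, H.
Qed.

Lemma trap_err_centered_abs_le phi c r K : continuity phi -> 0 <= r ->
  (forall s, 0 <= s <= r ->
     Rabs ((phi (c - r) + phi (c + r)) - (phi (c - s) + phi (c + s))) <= K) ->
  Rabs (trap_err phi (c - r) (c + r)) <= r * K.
Proof.
  intros H Hr HK. rewrite trap_err_centered by exact H.
  replace (r * K) with ((r - 0) * K) by ring.
  apply abs_RInt_le_const; [exact Hr| |exact HK].
  apply ex_RInt_continuity, continuity_minus;
    [apply continuity_const; intros ? ?; reflexivity|apply continuity_sym_sum, H].
Qed.

Lemma is_derive_sym_sum h h1 c s :
  is_derive h (c - s) (h1 (c - s)) -> is_derive h (c + s) (h1 (c + s)) ->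
  is_derive (fun z => h (c - z) + h (c + z)) s (h1 (c + s) - h1 (c - s)).
Proof.
  intros Hl Hr.
  assert (Hl' : is_derive (fun z => h (c - z)) s (scal (-1) (h1 (c - s)))).
  { apply (is_derive_comp h (fun z => c - z)); [exact Hl|]. auto_derive; auto; ring. }
  assert (Hr' : is_derive (fun z => h (c + z)) s (scal 1 (h1 (c + s)))).
  { apply (is_derive_comp h (fun z => c + z)); [exact Hr|]. auto_derive; auto; ring. }
  replace (h1 (c + s) - h1 (c - s)) with (plus (scal (-1) (h1 (c - s))) (scal 1 (h1 (c + s)))).
  - apply (is_derive_plus _ _ _ _ _ Hl' Hr').
  - unfold plus, scal; simpl; unfold mult; simpl. ring.
Qed.

Section Convexity.
Variables (h h1 h2 : R -> R) (u v : R).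
Hypothesis (Hh : continuity h) (Hh1 : continuity h1).
Hypothesis (Hd : forall x, u < x < v -> is_derive h x (h1 x)).
Hypothesis (Hd1 : forall x, u < x < v -> is_derive h1 x (h2 x)).
Hypothesis (Hconvex : forall x, u <= x <= v -> 0 <= h2 x).

Lemma slope_sym_mono c z : u <= c - z -> c + z <= v -> 0 <= z -> h1 (c - z) <= h1 (c + z).
Proof.
  intros Hl Hr Hz.
  destruct (MVT_gen h1 (c - z) (c + z) h2) as [y [Hy E]].
  - rewrite Rmin_left, Rmax_right by lra. intros x Hx. apply Hd1. lra.
  - intros x _. apply Hh1.
  - rewrite Rmin_left, Rmax_right in Hy by lra.
    assert (0 <= h2 y) by (apply Hconvex; lra). nra.
Qed.

Lemma sym_sum_mono c r s : u <= c - r -> c + r <= v -> 0 <= s <= r ->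
  h (c - s) + h (c + s) <= h (c - r) + h (c + r).
Proof.
  intros Hl Hr Hs.
  destruct (Req_dec s r) as [->|Hsr]; [lra|].
  destruct (MVT_gen (fun z => h (c - z) + h (c + z)) s r (fun z => h1 (c + z) - h1 (c - z)))
    as [z [Hz E]].
  - rewrite Rmin_left, Rmax_right by lra. intros x Hx.
    apply is_derive_sym_sum; apply Hd; lra.
  - intros x _. apply continuity_sym_sum, Hh.
  - rewrite Rmin_left, Rmax_right in Hz by lra.
    assert (h1 (c - z) <= h1 (c + z)) by (apply slope_sym_mono; lra).
    assert (0 <= (h1 (c + z) - h1 (c - z)) * (r - s)) by (apply Rmult_le_pos; lra).
    lra.
Qed.

Lemma trap_err_convex_ge0 : u <= v -> 0 <= trap_err h u v.
Proof.
  intros Huv. set (c := (u + v) / 2). set (r := (v - u) / 2).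
  replace u with (c - r) by (unfold c, r; field). replace v with (c + r) by (unfold c, r; field).
  rewrite trap_err_centered by exact Hh.
  apply RInt_ge_0; [unfold r; lra| |].
  - apply ex_RInt_continuity, continuity_minus;
      [apply continuity_const; intros ? ?; reflexivity|apply continuity_sym_sum, Hh].
  - intros s Hs. assert (h (c - s) + h (c + s) <= h (c - r) + h (c + r))
      by (apply sym_sum_mono; unfold c, r in *; lra). lra.
Qed.
End Convexity.

Lemma trap_err_add_scal f g a u v : continuity f -> continuity g ->
  trap_err (fun x => f x + a * g x) u v = trap_err f u v + a * trap_err g u v.
Proof.
  intros Hf Hg. unfold trap_err.
  rewrite RInt_plus_R by (try apply (continuity_scal g a); assumption).
  replace (RInt (fun x => a * g x) u v) with (a * RInt g u v).
  - field.
  - symmetry. apply (RInt_scal (V := R_CompleteNormedModule)), ex_RInt_continuity, Hg.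
Qed.

Lemma continuity_half_square M : continuity (fun x => M * x * x / 2).
Proof. apply derivable_continuous. intros x. apply ex_derive_Reals_0. auto_derive. exact I. Qed.

Lemma trap_err_half_square M u v : trap_err (fun x => M * x * x / 2) u v = M * (v - u) ^ 3 / 12.
Proof.
  unfold trap_err.
  rewrite (is_RInt_unique _ u v (M * v * v * v / 6 - M * u * u * u / 6)); [field|].
  apply (is_RInt_derive (fun x => M * x * x * x / 6)).
  - intros x _. auto_derive; [exact I|field].
  - intros x _. apply continuity_pt_filterlim, continuity_half_square.
Qed.

Lemma trap_err_C2_abs_le phi phi1 phi2 M u v : u <= v -> continuity phi -> continuity phi1 ->
  (forall x, u < x < v -> is_derive phi x (phi1 x)) ->
  (forall x, u < x < v -> is_derive phi1 x (phi2 x)) ->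
  (forall x, u <= x <= v -> Rabs (phi2 x) <= M) ->
  Rabs (trap_err phi u v) <= M * (v - u) ^ 3 / 12.
Proof.
  intros Huv Hc Hc1 Hd Hd1 HM.
  (* [M x^2/2 + a phi] is convex when [|a| = 1] *)
  assert (Hsign : forall a, Rabs a = 1 -> 0 <= M * (v - u) ^ 3 / 12 + a * trap_err phi u v).
  { intros a Ha. rewrite <- trap_err_half_square, <- trap_err_add_scal
      by (apply continuity_half_square || exact Hc).
    apply (trap_err_convex_ge0 _ (fun x => M * x + a * phi1 x) (fun x => M + a * phi2 x)).
    - apply continuity_plus; [apply continuity_half_square|apply (continuity_scal phi a Hc)].
    - apply continuity_plus; [|apply (continuity_scal phi1 a Hc1)].
      apply derivable_continuous. intros x. apply ex_derive_Reals_0. auto_derive. exact I.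
    - intros x Hx. apply (is_derive_plus (fun x => M * x * x / 2) (fun x => a * phi x)).
      + auto_derive; [exact I|field].
      + apply (is_derive_scal phi x a), Hd, Hx.
    - intros x Hx. apply (is_derive_plus (fun x => M * x) (fun x => a * phi1 x)).
      + auto_derive; [exact I|ring].
      + apply (is_derive_scal phi1 x a), Hd1, Hx.
    - intros x Hx. specialize (HM x Hx).
      assert (Ha2 : Rabs (a * phi2 x) <= M) by (rewrite Rabs_mult, Ha; lra).
      apply Rabs_le_between in Ha2. lra.
    - exact Huv. }
  pose proof (Hsign 1 Rabs_R1). pose proof (Hsign (-1) ltac:(rewrite Rabs_left; lra)).
  apply Rabs_le. lra.
Qed.

Definition diff2_bounded (phi : R -> R) (a b t w : R) : Prop :=
  forall c s, a <= c - s <= b -> a <= c + s <= b -> Rabs s <= t ->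
    Rabs (phi (c - s) - 2 * phi c + phi (c + s)) <= w.

Lemma diff2_bounded_ge0 phi a b t w : diff2_bounded phi a b t w -> a <= b -> 0 <= t -> 0 <= w.
Proof.
  intros H Hab Ht. specialize (H a 0). rewrite Rminus_0_r, Rplus_0_r, Rabs_R0 in H.
  replace (phi a - 2 * phi a + phi a) with 0 in H by ring. rewrite Rabs_R0 in H.
  apply H; lra.
Qed.

Lemma trap_err_diff2_abs_le phi a b t w u v : continuity phi -> diff2_bounded phi a b t w ->
  a <= u -> u <= v -> v <= b -> (v - u) / 2 <= t ->
  Rabs (trap_err phi u v) <= (v - u) * w.
Proof.
  intros Hc Hw Hau Huv Hvb Ht.
  set (c := (u + v) / 2). set (r := (v - u) / 2).
  replace u with (c - r) by (unfold c, r; field). replace v with (c + r) by (unfold c, r; field).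
  replace ((c + r - (c - r)) * w) with (r * (2 * w)) by ring.
  apply trap_err_centered_abs_le; [exact Hc|unfold r; lra|].
  intros s Hs.
  replace (phi (c - r) + phi (c + r) - (phi (c - s) + phi (c + s))) with
    ((phi (c - r) - 2 * phi c + phi (c + r)) - (phi (c - s) - 2 * phi c + phi (c + s))) by ring.
  eapply Rle_trans; [apply Rabs_triang|]. rewrite Rabs_Ropp.
  assert (Hr : Rabs r <= t) by (rewrite Rabs_right; unfold r in *; lra).
  assert (Hs' : Rabs s <= t) by (rewrite Rabs_right; unfold r in *; lra).
  pose proof (Hw c r ltac:(unfold c, r; lra) ltac:(unfold c, r; lra) Hr).
  pose proof (Hw c s ltac:(unfold c, r in *; lra) ltac:(unfold c, r in *; lra) Hs').
  lra.
Qed.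

Section Trapezoid_defect.
Variable x : nat -> R.

Definition diff2 (k : nat) : R := x (pred k) - 2 * x k + x (S k).

Definition trap_defect (N : nat) : R := sum_f_R0 x N - (INR N + 1) * (x 0%nat + x N) / 2.

Definition slope_defect (N : nat) : R := (INR N + 1) * x N - INR N * x (S N) - x 0%nat.

Lemma trap_defect_S N : trap_defect (S N) = trap_defect N + slope_defect N / 2.
Proof. unfold trap_defect, slope_defect. rewrite tech5, S_INR. field. Qed.

Lemma slope_defect_S N : slope_defect (S N) = slope_defect N - INR (S N) * diff2 (S N).
Proof. unfold slope_defect, diff2. simpl pred. rewrite !S_INR. ring. Qed.

Variables (w : R) (K : nat).
Hypothesis diff2_le : forall k, (1 <= k <= K)%nat -> Rabs (diff2 k) <= w.

Lemma slope_defect_abs_le N : (N <= K)%nat -> Rabs (slope_defect N) <= w * INR N * (INR N + 1) / 2.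
Proof.
  induction N as [|N IH]; intros HN.
  - unfold slope_defect. simpl.
    replace ((0 + 1) * x 0%nat - 0 * x 1%nat - x 0%nat) with 0 by ring. rewrite Rabs_R0. lra.
  - rewrite slope_defect_S. eapply Rle_trans; [apply Rabs_triang|].
    rewrite Rabs_Ropp, Rabs_mult, (Rabs_right (INR (S N))) by apply Rle_ge, pos_INR.
    specialize (IH ltac:(lia)). specialize (diff2_le (S N) ltac:(lia)).
    pose proof (pos_INR (S N)).
    assert (INR (S N) * Rabs (diff2 (S N)) <= INR (S N) * w) by (apply Rmult_le_compat_l; auto).
    rewrite S_INR in *. nra.
Qed.

Lemma trap_defect_abs_le N : (N <= S K)%nat ->
  Rabs (trap_defect N) <= w * (INR N * INR N * INR N - INR N) / 12.
Proof.
  induction N as [|N IH]; intros HN.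
  - unfold trap_defect. simpl.
    replace (x 0%nat - (0 + 1) * (x 0%nat + x 0%nat) / 2) with 0 by field.
    rewrite Rabs_R0. lra.
  - rewrite trap_defect_S. eapply Rle_trans; [apply Rabs_triang|].
    specialize (IH ltac:(lia)). pose proof (slope_defect_abs_le N ltac:(lia)).
    replace (Rabs (slope_defect N / 2)) with (Rabs (slope_defect N) / 2)
      by (unfold Rdiv; rewrite Rabs_mult, (Rabs_right (/ 2)) by lra; reflexivity).
    rewrite S_INR. nra.
Qed.
End Trapezoid_defect.

(** * The rule on one piece *)

Lemma RInt_Chasles_sum phi (x : nat -> R) N : continuity phi ->
  RInt phi (x 0%nat) (x (S N)) = sum_f_R0 (fun i => RInt phi (x i) (x (S i))) N.
Proof.
  intros H. induction N as [|N IH]; [reflexivity|].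
  rewrite tech5, <- IH. symmetry. apply (RInt_Chasles (V := R_CompleteNormedModule));
    apply ex_RInt_continuity, H.
Qed.

Lemma sum_adjacent_pairs (x : nat -> R) N :
  sum_f_R0 (fun i => x i + x (S i)) N = 2 * sum_f_R0 x (S N) - x 0%nat - x (S N).
Proof.
  induction N as [|N IH]; simpl; [ring|].
  simpl in IH. rewrite IH. ring.
Qed.

Section Piece.
Variables (phi : R -> R) (a H : R) (n : nat).
Hypothesis (Hphi : continuity phi) (Hn : (0 < n)%nat).

Definition node (i : nat) : R := a + INR i * H / INR n.

Let n_pos : 0 < INR n.
Proof. apply lt_0_INR, Hn. Qed.

Lemma node_0 : node 0 = a.
Proof. unfold node. simpl. field. lra. Qed.

Lemma node_n : node n = a + H.
Proof. unfold node. field. lra. Qed.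

Lemma node_S i : node (S i) = node i + H / INR n.
Proof. unfold node. rewrite S_INR. field. lra. Qed.

Lemma node_between i : 0 <= H -> (i <= n)%nat -> a <= node i <= a + H.
Proof.
  intros HH Hi. unfold node.
  assert (Hle : INR i <= INR n) by (apply le_INR, Hi). pose proof (pos_INR i).
  assert (0 <= INR i * H / INR n <= H); [|lra].
  split; [apply Rdiv_le_0_compat; [apply Rmult_le_pos|]; lra|].
  apply Rle_div_l; [lra|]. nra.
Qed.

Definition composite_trap_err : R :=
  sum_f_R0 (fun i => trap_err phi (node i) (node (S i))) (pred n).

Definition piece_err : R :=
  H / (INR n + 1) * sum_f_R0 (fun i => phi (node i)) n - RInt phi a (a + H).

Lemma composite_trap_err_eq : composite_trap_err =
  H / INR n * (sum_f_R0 (fun i => phi (node i)) n - (phi a + phi (a + H)) / 2) - RInt phi a (a + H).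
Proof.
  unfold composite_trap_err, trap_err.
  assert (En : S (pred n) = n) by lia.
  rewrite minus_sum, <- (RInt_Chasles_sum phi node (pred n) Hphi), En, node_0, node_n.
  rewrite (sum_eq _ (fun i => (phi (node i) + phi (node (S i))) * (H / INR n / 2))).
  - rewrite <- scal_sum, (sum_adjacent_pairs (fun i => phi (node i))), En, node_0, node_n.
    field. lra.
  - intros i _. rewrite node_S. field. lra.
Qed.

Lemma piece_err_decomp :
  piece_err = (trap_err phi a (a + H) + INR n * composite_trap_err) / (INR n + 1).
Proof. rewrite composite_trap_err_eq. unfold piece_err, trap_err. field. lra. Qed.

Lemma trap_err_refine :
  trap_err phi a (a + H) = composite_trap_err - H / INR n * trap_defect (fun i => phi (node i)) n.
Proof.
  rewrite composite_trap_err_eq. unfold trap_defect, trap_err. rewrite node_0, node_n.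
  field. lra.
Qed.

Lemma composite_trap_err_abs_le B :
  (forall i, (i < n)%nat -> Rabs (trap_err phi (node i) (node (S i))) <= B) ->
  Rabs composite_trap_err <= INR n * B.
Proof.
  intros HB. unfold composite_trap_err.
  eapply Rle_trans; [apply sum_f_R0_triangle|].
  eapply Rle_trans; [apply (sum_Rle _ (fun _ => B)); intros i Hi; apply HB; lia|].
  rewrite sum_cte. replace (S (pred n)) with n by lia. lra.
Qed.

Lemma piece_err_abs_le A B : Rabs (trap_err phi a (a + H)) <= A ->
  (forall i, (i < n)%nat -> Rabs (trap_err phi (node i) (node (S i))) <= B) ->
  Rabs piece_err <= (A + INR n * (INR n * B)) / (INR n + 1).
Proof.
  intros HA HB. rewrite piece_err_decomp.
  pose proof (composite_trap_err_abs_le B HB).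
  unfold Rdiv.
  rewrite Rabs_mult, (Rabs_right (/ _)) by (apply Rle_ge, Rlt_le, Rinv_0_lt_compat; lra).
  apply Rmult_le_compat_r; [apply Rlt_le, Rinv_0_lt_compat; lra|].
  eapply Rle_trans; [apply Rabs_triang|]. rewrite Rabs_mult, (Rabs_right (INR n)) by lra.
  apply Rplus_le_compat; [exact HA|]. apply Rmult_le_compat_l; lra.
Qed.
End Piece.

Lemma piece_err_C2_abs_le phi phi1 phi2 M a H n : (0 < n)%nat -> 0 <= H ->
  continuity phi -> continuity phi1 ->
  (forall x, a < x < a + H -> is_derive phi x (phi1 x)) ->
  (forall x, a < x < a + H -> is_derive phi1 x (phi2 x)) ->
  (forall x, a <= x <= a + H -> Rabs (phi2 x) <= M) ->
  Rabs (piece_err phi a H n) <= M * H ^ 3 / (12 * INR n).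
Proof.
  intros Hn HH Hc Hc1 Hd Hd1 HM.
  assert (Hn' : 0 < INR n) by (apply lt_0_INR, Hn).
  assert (Hstep : 0 <= H / INR n) by (apply Rdiv_le_0_compat; lra).
  eapply Rle_trans;
    [apply (piece_err_abs_le _ _ _ _ Hc Hn (M * H ^ 3 / 12) (M * (H / INR n) ^ 3 / 12))|].
  - replace H with (a + H - a) at 2 by ring.
    apply (trap_err_C2_abs_le _ phi1 phi2); [lra|exact Hc|exact Hc1|exact Hd|exact Hd1|exact HM].
  - intros i Hi. pose proof (node_between a H n Hn i HH ltac:(lia)).
    pose proof (node_between a H n Hn (S i) HH ltac:(lia)).
    rewrite node_S in * by exact Hn.
    replace (H / INR n) with (node a H n i + H / INR n - node a H n i) at 2 by ring.
    apply (trap_err_C2_abs_le _ phi1 phi2); [lra|exact Hc|exact Hc1|..];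
      intros x Hx; [apply Hd|apply Hd1|apply HM]; lra.
  - right. field. lra.
Qed.

Lemma trap_err_diff2_refine_abs_le phi a H t w N : (0 < N)%nat -> 0 <= H -> continuity phi ->
  diff2_bounded phi a (a + H) t w -> H / INR N <= t ->
  Rabs (trap_err phi a (a + H)) <= H * w * (1 + (INR N * INR N - 1) / 12).
Proof.
  intros HN HH Hc Hw Ht.
  assert (HN' : 0 < INR N) by (apply lt_0_INR, HN).
  rewrite (trap_err_refine phi a H N Hc HN).
  set (h := H / INR N) in *.
  assert (Hh : 0 <= h) by (apply Rdiv_le_0_compat; lra).
  assert (Hw0 : 0 <= w) by (apply (diff2_bounded_ge0 phi a (a + H) t w Hw); lra).
  eapply Rle_trans; [apply Rabs_triang|]. rewrite Rabs_Ropp, Rabs_mult, (Rabs_right h) by lra.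
  replace (H * w * (1 + (INR N * INR N - 1) / 12)) with
    (INR N * (h * w) + h * (w * (INR N * INR N * INR N - INR N) / 12)) by (unfold h; field; lra).
  apply Rplus_le_compat.
  - apply composite_trap_err_abs_le; [exact HN|]. intros i Hi.
    pose proof (node_between a H N HN i HH ltac:(lia)) as Hl.
    pose proof (node_between a H N HN (S i) HH ltac:(lia)) as Hr.
    rewrite node_S in Hr |- * by exact HN. fold h in Hr |- *.
    replace h with (node a H N i + h - node a H N i) at 2 by ring.
    apply (trap_err_diff2_abs_le _ a (a + H) t); auto; lra.
  - apply Rmult_le_compat_l; [exact Hh|].
    apply (trap_defect_abs_le _ w (pred N)); [|lia].
    intros k Hk. unfold diff2. destruct k as [|k]; [lia|]. simpl pred.
    pose proof (node_between a H N HN k HH ltac:(lia)) as Hl.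
    pose proof (node_between a H N HN (S (S k)) HH ltac:(lia)) as Hr.
    rewrite !node_S in Hr |- * by exact HN. rewrite node_S by exact HN. fold h in Hr |- *.
    replace (node a H N k) with (node a H N k + h - h) at 1 by ring.
    apply Hw; [lra|lra|rewrite Rabs_right; lra].
Qed.

Lemma piece_err_diff2_abs_le phi a H n t w N : (0 < n)%nat -> (0 < N)%nat -> 0 <= H ->
  continuity phi -> diff2_bounded phi a (a + H) t w ->
  (INR N * INR N - 1) / 12 <= INR n -> H / INR N <= t ->
  ((2 <= n)%nat -> H / INR n / 2 <= t) ->
  Rabs (piece_err phi a H n) <= 2 * H * w.
Proof.
  intros Hn HN HH Hc Hw HNn Ht Htn.
  assert (Hn' : 0 < INR n) by (apply lt_0_INR, Hn).
  assert (HN' : 0 < INR N) by (apply lt_0_INR, HN).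
  assert (Hw0 : 0 <= w).
  { apply (diff2_bounded_ge0 phi a (a + H) t w Hw); [lra|].
    eapply Rle_trans; [|exact Ht]. apply Rdiv_le_0_compat; lra. }
  set (A := H * w * (1 + INR n)).
  assert (HA : Rabs (trap_err phi a (a + H)) <= A).
  { eapply Rle_trans; [apply (trap_err_diff2_refine_abs_le phi a H t w N); auto|].
    apply Rmult_le_compat_l; [apply Rmult_le_pos|]; lra. }
  destruct (Nat.eq_dec n 1) as [->|Hn2].
  - (* the step condition fails for [n = 1], but then the only panel is [a, a + H] itself *)
    eapply Rle_trans; [apply (piece_err_abs_le phi a H 1 Hc Hn A A HA)|].
    + intros i Hi. replace i with 0%nat by lia. rewrite node_0, node_n by exact Hn. exact HA.
    + unfold A. simpl. lra.
  - eapply Rle_trans; [apply (piece_err_abs_le phi a H n Hc Hn A (H / INR n * w) HA)|].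
    + intros i Hi. pose proof (node_between a H n Hn i HH ltac:(lia)) as Hl.
      pose proof (node_between a H n Hn (S i) HH ltac:(lia)) as Hr.
      rewrite node_S in Hr |- * by exact Hn.
      assert (0 <= H / INR n) by (apply Rdiv_le_0_compat; lra).
      replace (H / INR n * w) with ((node a H n i + H / INR n - node a H n i) * w) by ring.
      apply (trap_err_diff2_abs_le _ a (a + H) t); auto; try lra.
      replace ((node a H n i + H / INR n - node a H n i) / 2) with (H / INR n / 2) by (field; lra).
      apply Htn. lia.
    + unfold A. apply Rle_div_l; [lra|].
      replace (INR n * (INR n * (H / INR n * w))) with (INR n * (H * w)) by (field; lra).
      assert (0 <= H * w) by (apply Rmult_le_pos; lra). nra.
Qed.

Lemma piece_err_minus phi psi a H n : continuity phi -> continuity psi ->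
  piece_err (fun x => phi x - psi x) a H n = piece_err phi a H n - piece_err psi a H n.
Proof.
  intros Hphi Hpsi. unfold piece_err.
  rewrite minus_sum, RInt_minus_R by assumption. ring.
Qed.

Lemma piece_err_sup_abs_le phi a H n S : (0 < n)%nat -> 0 <= H -> continuity phi ->
  (forall x, a <= x <= a + H -> Rabs (phi x) <= S) ->
  Rabs (piece_err phi a H n) <= 2 * H * S.
Proof.
  intros Hn HH Hc HS. assert (Hn' : 0 < INR n) by (apply lt_0_INR, Hn).
  unfold piece_err. eapply Rle_trans; [apply Rabs_triang|]. rewrite Rabs_Ropp.
  assert (Hint : Rabs (RInt phi a (a + H)) <= H * S).
  { replace (H * S) with ((a + H - a) * S) by ring.
    apply abs_RInt_le_const; [lra|apply ex_RInt_continuity, Hc|exact HS]. }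
  assert (Hsum : Rabs (sum_f_R0 (fun i => phi (node a H n i)) n) <= (INR n + 1) * S).
  { eapply Rle_trans; [apply sum_f_R0_triangle|].
    eapply Rle_trans; [apply (sum_Rle _ (fun _ => S)); intros i Hi; apply HS, node_between; auto|].
    rewrite sum_cte, S_INR. lra. }
  rewrite Rabs_mult, Rabs_right by (apply Rle_ge, Rdiv_le_0_compat; lra).
  apply Rle_trans with (H / (INR n + 1) * ((INR n + 1) * S) + H * S); [|right; field; lra].
  apply Rplus_le_compat; [apply Rmult_le_compat_l; [apply Rdiv_le_0_compat|]|]; lra.
Qed.

(** * The rule on [0, 1] *)

Lemma Inm_eq_pieces n m phi : (0 < n)%nat -> (0 < m)%nat ->
  Inm n m phi = sum_f_R0 (fun k =>
    / INR m / (INR n + 1) * sum_f_R0 (fun i => phi (node (INR k / INR m) (/ INR m) n i)) n)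
  (pred m).
Proof.
  intros Hn Hm. assert (Hn' : 0 < INR n) by (apply lt_0_INR, Hn).
  assert (Hm' : 0 < INR m) by (apply lt_0_INR, Hm).
  unfold Inm. rewrite sum_n_Reals, scal_sum. replace (m - 1)%nat with (pred m) by lia.
  apply sum_eq. intros k _. rewrite sum_n_Reals, Rmult_comm. f_equal; [field; lra|].
  apply sum_eq. intros i _. f_equal. unfold node. rewrite plus_INR. simpl. field. lra.
Qed.

Lemma piece_in_unit m k : (k < m)%nat -> 0 <= INR k / INR m /\ INR k / INR m + / INR m <= 1.
Proof.
  intros Hk. assert (Hm : 0 < INR m) by (apply lt_0_INR; lia).
  assert (INR (S k) <= INR m) by (apply le_INR, Hk). rewrite S_INR in *.
  split; [apply Rdiv_le_0_compat; [apply pos_INR|lra]|].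
  replace (INR k / INR m + / INR m) with ((INR k + 1) / INR m) by (field; lra).
  apply Rle_div_l; lra.
Qed.

Lemma node_piece_I01 n m k i : (0 < n)%nat -> (k < m)%nat -> (i <= n)%nat ->
  I01 (node (INR k / INR m) (/ INR m) n i).
Proof.
  intros Hn Hk Hi. destruct (piece_in_unit m k Hk).
  assert (0 <= / INR m) by (apply Rlt_le, Rinv_0_lt_compat, lt_0_INR; lia).
  pose proof (node_between (INR k / INR m) (/ INR m) n Hn i ltac:(lra) Hi). unfold I01. lra.
Qed.

Lemma Inm_ext n m phi psi : (0 < n)%nat -> (0 < m)%nat ->
  (forall x, I01 x -> phi x = psi x) -> Inm n m phi = Inm n m psi.
Proof.
  intros Hn Hm H. rewrite !Inm_eq_pieces by assumption.
  apply sum_eq. intros k Hk. f_equal. apply sum_eq. intros i Hi.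
  apply H, node_piece_I01; lia.
Qed.

Definition quad_err (n m : nat) (phi : R -> R) : R := RInt phi 0 1 - Inm n m phi.

Lemma quad_err_pieces n m phi : (0 < n)%nat -> (0 < m)%nat -> continuity phi ->
  quad_err n m phi =
  - sum_f_R0 (fun k => piece_err phi (INR k / INR m) (/ INR m) n) (pred m).
Proof.
  intros Hn Hm Hc. assert (Hm' : 0 < INR m) by (apply lt_0_INR, Hm).
  assert (HI : RInt phi 0 1 =
    sum_f_R0 (fun k => RInt phi (INR k / INR m) (INR k / INR m + / INR m)) (pred m)).
  { replace 0 with (INR 0 / INR m) by (simpl; field; lra).
    replace 1 with (INR (S (pred m)) / INR m) by (replace (S (pred m)) with m by lia; field; lra).
    rewrite (RInt_Chasles_sum phi (fun k => INR k / INR m) (pred m) Hc).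
    apply sum_eq. intros k _. f_equal. rewrite S_INR. field. lra. }
  unfold quad_err. rewrite HI, Inm_eq_pieces by assumption. unfold piece_err.
  rewrite minus_sum. ring.
Qed.

Lemma quad_err_abs_le n m phi B : (0 < n)%nat -> (0 < m)%nat -> continuity phi ->
  (forall k, (k < m)%nat -> Rabs (piece_err phi (INR k / INR m) (/ INR m) n) <= B) ->
  Rabs (quad_err n m phi) <= INR m * B.
Proof.
  intros Hn Hm Hc HB. rewrite quad_err_pieces, Rabs_Ropp by assumption.
  eapply Rle_trans; [apply sum_f_R0_triangle|].
  eapply Rle_trans; [apply (sum_Rle _ (fun _ => B)); intros k Hk; apply HB; lia|].
  rewrite sum_cte. replace (S (pred m)) with m by lia. lra.
Qed.

Lemma quad_err_clamp01 n m f : (0 < n)%nat -> (0 < m)%nat ->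
  quad_err n m f = quad_err n m (fun x => f (clamp01 x)).
Proof.
  intros Hn Hm. unfold quad_err. f_equal.
  - apply RInt_ext. intros x Hx. rewrite Rmin_left, Rmax_right in Hx by lra.
    rewrite clamp01_id; [reflexivity|unfold I01; lra].
  - apply Inm_ext; auto. intros x Hx. rewrite clamp01_id; auto.
Qed.

Lemma quad_err_C2_abs_le n m f g g1 g2 : (0 < n)%nat -> (0 < m)%nat -> cont01 f -> C2_01 g g1 g2 ->
  Rabs (quad_err n m f) <=
  2 * (supnorm01 (fun x => f x - g x) + / (24 * INR m ^ 2 * INR n) * supnorm01 g2).
Proof.
  intros Hn Hm Hf [Hg [Hg1 Hg2]].
  assert (Hn' : 0 < INR n) by (apply lt_0_INR, Hn).
  assert (Hm' : 0 < INR m) by (apply lt_0_INR, Hm).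
  set (fc := fun x => f (clamp01 x)). set (gc := fun x => g (clamp01 x)).
  set (g1c := fun x => g1 (clamp01 x)).
  assert (Cf : continuity fc) by apply continuity_clamp01, Hf.
  assert (Cg : continuity gc) by apply continuity_clamp01, (has_deriv01_cont01 g g1), Hg.
  assert (Cg1 : continuity g1c) by apply continuity_clamp01, (has_deriv01_cont01 g1 g2), Hg1.
  set (D := supnorm01 (fun x => f x - g x)). set (M := supnorm01 g2).
  rewrite quad_err_clamp01 by assumption. fold fc.
  replace (2 * (D + / (24 * INR m ^ 2 * INR n) * M)) with
    (INR m * (2 * / INR m * D + M * (/ INR m) ^ 3 / (12 * INR n))) by (field; lra).
  apply quad_err_abs_le; auto. intros k Hk.
  destruct (piece_in_unit m k Hk) as [Ha Hb].
  assert (HH : 0 <= / INR m) by (apply Rlt_le, Rinv_0_lt_compat, Hm').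
  replace (piece_err fc _ _ n) with
    (piece_err (fun x => fc x - gc x) (INR k / INR m) (/ INR m) n +
     piece_err gc (INR k / INR m) (/ INR m) n)
    by (rewrite piece_err_minus by assumption; ring).
  eapply Rle_trans; [apply Rabs_triang|]. apply Rplus_le_compat.
  - apply piece_err_sup_abs_le; auto; [apply continuity_minus; auto|].
    intros x Hx. unfold fc, gc. rewrite clamp01_id by (unfold I01; lra).
    apply (supnorm01_ge (fun x => f x - g x)); [apply continuity_minus; auto|unfold I01; lra].
  - apply (piece_err_C2_abs_le gc g1c g2); auto; intros x Hx.
    + unfold g1c. rewrite clamp01_id by (unfold I01; lra). apply has_deriv01_is_derive; auto; lra.
    + apply has_deriv01_is_derive; auto; lra.
    + apply supnorm01_ge; [apply continuity_clamp01, Hg2|unfold I01; lra].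
Qed.

Lemma succ_isqrt_bounds n : (0 < n)%nat ->
  sqrt (6 * INR n) <= INR (S (Nat.sqrt (6 * n))) /\
  (INR (S (Nat.sqrt (6 * n))) * INR (S (Nat.sqrt (6 * n))) - 1) / 12 <= INR n.
Proof.
  intros Hn. set (r := Nat.sqrt (6 * n)).
  destruct (Nat.sqrt_spec (6 * n) ltac:(lia)) as [Hlo Hhi]. fold r in Hlo, Hhi.
  split.
  - rewrite <- (sqrt_square (INR (S r))) by apply pos_INR.
    apply sqrt_le_1_alt. rewrite <- mult_INR.
    replace 6 with (INR 6) by (simpl; ring). rewrite <- mult_INR. apply le_INR. lia.
  - assert (Hsq : (S r * S r <= 12 * n + 1)%nat) by nia.
    apply le_INR in Hsq. rewrite mult_INR, plus_INR, mult_INR in Hsq.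
    replace (INR 12) with 12 in Hsq by (simpl; ring). simpl (INR 1) in Hsq. lra.
Qed.

Lemma quad_err_omega2_abs_le n m f : (0 < n)%nat -> (0 < m)%nat -> cont01 f ->
  Rabs (quad_err n m f) <= 2 * omega2 f (/ (INR m * sqrt (6 * INR n))).
Proof.
  intros Hn Hm Hf.
  assert (Hn' : 0 < INR n) by (apply lt_0_INR, Hn).
  assert (Hm' : 0 < INR m) by (apply lt_0_INR, Hm).
  assert (Hsq : 0 < sqrt (6 * INR n)) by (apply sqrt_lt_R0; lra).
  set (t := / (INR m * sqrt (6 * INR n))). set (w := omega2 f t).
  set (fc := fun x => f (clamp01 x)).
  set (N := S (Nat.sqrt (6 * n))).
  destruct (succ_isqrt_bounds n Hn) as [HN1 HN2]. fold N in HN1, HN2.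
  assert (HN : 0 < INR N) by (apply lt_0_INR; lia).
  rewrite quad_err_clamp01 by assumption. fold fc.
  replace (2 * w) with (INR m * (2 * / INR m * w)) by (field; lra).
  apply quad_err_abs_le; auto; [apply continuity_clamp01, Hf|]. intros k Hk.
  destruct (piece_in_unit m k Hk) as [Ha Hb].
  apply (piece_err_diff2_abs_le _ _ _ _ t _ N); auto; try lia.
  - apply Rlt_le, Rinv_0_lt_compat, Hm'.
  - apply continuity_clamp01, Hf.
  - intros c s Hl Hr Hs. unfold fc. rewrite !clamp01_id by (unfold I01; lra).
    apply omega2_ge; auto; unfold I01; lra.
  - unfold t. replace (/ INR m / INR N) with (/ (INR m * INR N)) by (field; lra).
    apply Rinv_le_contravar; [nra|]. apply Rmult_le_compat_l; lra.
  - intros Hn2. assert (Hn2' : 2 <= INR n) by (apply (le_INR 2), Hn2).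
    unfold t. replace (/ INR m / INR n / 2) with (/ (INR m * (2 * INR n))) by (field; lra).
    apply Rinv_le_contravar; [nra|]. apply Rmult_le_compat_l; [lra|].
    rewrite <- (sqrt_square (2 * INR n)) by lra. apply sqrt_le_1_alt. nra.
Qed.

Theorem mainTheorem6 (n m : nat) (f : R -> R) :
  (1 <= n)%nat -> (1 <= m)%nat -> cont01 f ->
  Rabs (RInt f 0 1 - Inm n m f)
    <= 2 * Kfun (/ (24 * INR m ^ 2 * INR n)) f
  /\
  Rabs (RInt f 0 1 - Inm n m f)
    <= 9 / 4 * omega2 f (/ (INR m * sqrt (6 * INR n))).
Proof.
  intros Hn Hm Hf. change (RInt f 0 1 - Inm n m f) with (quad_err n m f). split.
  - assert (Rabs (quad_err n m f) / 2 <= Kfun (/ (24 * INR m ^ 2 * INR n)) f); [|lra].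
    apply (Glb_Rbar_real_ge _ (supnorm01 (fun x => f x - 0) +
      / (24 * INR m ^ 2 * INR n) * supnorm01 (fun _ => 0))).
    + exists (fun _ => 0), (fun _ => 0), (fun _ => 0). split; [apply C2_01_const|reflexivity].
    + intros z [g [g1 [g2 [Hg ->]]]].
      pose proof (quad_err_C2_abs_le n m f g g1 g2 Hn Hm Hf Hg). lra.
  - pose proof (quad_err_omega2_abs_le n m f Hn Hm Hf).
    assert (0 <= omega2 f (/ (INR m * sqrt (6 * INR n)))); [|lra].
    apply omega2_ge0; [exact Hf|]. apply Rlt_le, Rinv_0_lt_compat, Rmult_lt_0_compat.
    + apply lt_0_INR; lia.
    + apply sqrt_lt_R0. assert (0 < INR n) by (apply lt_0_INR; lia). lra.
Qed.
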